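(* Let $t<n/2$ and $S=\{\{3,4\},\{5,6\},\dots,\{2t+1,2t+2\}\}$. Then $\widehat{1_{\mathcal{F}_S}}(2(n-t,1^t))\ne 0$, where $\mathcal{F}_S=\{m\in\mathcal{M}_{2n}: S\subseteq m\}$.
   Context: $\mathcal{M}_{2n}$ is the set of perfect matchings of $K_{2n}$ on $[2n]$, with the natural action of $S_{2n}$; $m^*=\{\{1,2\},\{3,4\},\dots,\{2n-1,2n\}\}$. For $f\in\mathbb{R}[\mathcal{M}_{2n}]$ let $\tilde f(\sigma)=f(\sigma m^* )$ for $\sigma\in S_{2n}$, and for an irreducible representation $\rho$ of $S_{2n}$ let $\hat f(\rho)=\frac{1}{(2n)!}\sum_{\sigma\in S_{2n}}\tilde f(\sigma)\rho(\sigma)$. $2(n-t,1^t)$ denotes the irreducible of $S_{2n}$ indexed by the partition $(2(n-t),2,\dots,2)\vdash 2n$ with $t$ parts equal to $2$. $1_{\mathcal{F}_S}$ is the characteristic function of $\mathcal{F}_S$. *)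

From HB Require Import structures.
From mathcomp Require Import all_boot all_fingroup all_order all_algebra.
Set Implicit Arguments. Unset Strict Implicit. Unset Printing Implicit Defensive.
Import Order.TTheory GRing.Theory Num.Theory.
Local Open Scope ring_scope.

Definition pmatching (n : nat) (m : {set {set 'I_(2 * n)}}) : bool :=
  partition m [set: 'I_(2 * n)] && [forall e in m, #|e| == 2%N].

Definition mact (n : nat) (s : 'S_(2 * n)) (m : {set {set 'I_(2 * n)}}) :
  {set {set 'I_(2 * n)}} := [set (s @: e) | e : {set 'I_(2 * n)} in m].

(* the pair {2k+1, 2k+2} (1-indexed), i.e. {2k, 2k+1} 0-indexed *)
Definition pairk (n : nat) (k : nat) : {set 'I_(2 * n)} := [set i : 'I_(2 * n) | (nat_of_ord i)./2 == k].

Definition mstar (n : nat) : {set {set 'I_(2 * n)}} :=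
  [set pairk n k | k : 'I_n].

Definition Sset (n t : nat) : {set {set 'I_(2 * n)}} :=
  [set pairk n k | k : 'I_n & (1 <= k <= t)%N].

Definition FS (n : nat) (S : {set {set 'I_(2 * n)}}) : {set {set {set 'I_(2 * n)}}} :=
  [set m | pmatching m && (S \subset m)].

Definition indFS (R : nzRingType) (n : nat) (S : {set {set 'I_(2 * n)}})
  (m : {set {set 'I_(2 * n)}}) : R := (m \in FS S)%:R.

Definition ftilde (R : Type) (n : nat) (f : {set {set 'I_(2 * n)}} -> R)
  (s : 'S_(2 * n)) : R := f (mact s (mstar n)).

(* A shape lam = [:: l_0; l_1; ...] (a partition of N).  Position p of the
   canonical tableau (filled in reading order) lies at (row, column)
   rowcol lam p. *)
Fixpoint rowcol (lam : seq nat) (p : nat) : nat * nat :=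
  match lam with
  | [::] => (0%N, p)
  | a :: l => if (p < a)%N then (0%N, p)
              else let rc := rowcol l (p - a) in (rc.1.+1, rc.2)
  end.

(* A tabloid is recorded as the function entry |-> row. *)
Notation tabloid N := {ffun 'I_N -> 'I_N.+1}.

(* A tableau of shape lam is a permutation tau: position p holds entry tau p.
   Its tabloid {tau}: entry x lies in row (rowcol lam ((tau^-1)%g x)).1 *)
Definition tabloid_of (lam : seq nat) (N : nat) (tau : 'S_N) : tabloid N :=
  [ffun x : 'I_N => inord (rowcol lam ((tau^-1)%g x)).1].

Notation tvec R N := {ffun tabloid N -> R^o}.

Definition tdelta (R : nzRingType) (N : nat) (r : tabloid N) : tvec R N :=
  [ffun r' => (r' == r)%:R].

(* left action of S_N on M^lam: (pi . v)(r) = v(r o pi), so that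
   pi . tdelta r = tdelta (r o pi^-1) *)
Definition pact (R : nzRingType) (N : nat) (pi : 'S_N) (v : tvec R N) : tvec R N :=
  [ffun r : tabloid N => v [ffun x => r (pi x)]].

Definition colstab (lam : seq nat) (N : nat) (tau : 'S_N) : pred 'S_N :=
  [pred k : 'S_N | [forall x : 'I_N,
     (rowcol lam ((tau^-1)%g (k x))).2 == (rowcol lam ((tau^-1)%g x)).2]].

(* polytabloid e_tau = sum_{k in C_tau} sgn(k) {k o tau}
   (k o tau as functions is tau * k in mathcomp) *)
Definition polytabloid (R : nzRingType) (lam : seq nat) (N : nat) (tau : 'S_N)
  : tvec R N :=
  \sum_(k : 'S_N | colstab lam tau k) ((-1) ^+ k) *: tdelta R (tabloid_of lam (tau * k)%g).

Definition in_specht (R : nzRingType) (lam : seq nat) (N : nat) (v : tvec R N) : Prop :=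
  exists c : 'S_N -> R, v = \sum_(tau : 'S_N) c tau *: polytabloid R lam tau.

(* hat f(rho) for rho = S^lam, as the linear operator
   v |-> 1/N! sum_sigma f~(sigma) rho(sigma) v  on S^lam *)
Definition fourier (R : fieldType) (N : nat) (g : 'S_N -> R) (v : tvec R N) : tvec R N :=
  (N`!%:R)^-1 *: \sum_(s : 'S_N) g s *: pact s v.

(* the partition 2(n-t,1^t) = (2(n-t), 2, ..., 2) with t parts equal to 2 *)
Definition shape2 (n t : nat) : seq nat := (2 * (n - t))%N :: nseq t 2%N.

Definition fourier_nonzero (R : fieldType) (N : nat) (lam : seq nat) (g : 'S_N -> R) : Prop :=
  exists v : tvec R N, in_specht lam v /\ fourier g v != 0.

(* Take the polytabloid e of the identity tableau of shape (2(n-t),2,...,2)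
   and evaluate the Fourier transform of 1_{F_S} at the tabloid r whose rows
   1..t are the edges of S.  The value is a sum of terms g(s) e(r o s) with
   g(s) = [S in s m*].  Each term is nonnegative: if r o s = {k} for k in the
   column stabiliser and S is in s m*, then k preserves parities and maps
   pairs {2i, 2i+1} onto pairs, i.e. k commutes with the involution d
   swapping partners, so k = k0 * k0^d is even.  The rotation of the pairs of
   m* by t+1 contributes 1. *)

From Pilot Require Import Defs.
From mathcomp Require Import all_boot all_fingroup all_algebra zify.
Import GRing.Theory Num.Theory.
Set Implicit Arguments. Unset Strict Implicit. Unset Printing Implicit Defensive.

Lemma odd_perm_morph_involution (T : finType) (d k : {perm T}) (A : {set T}) :
    involutive d -> (forall x, (d x \in A) = (x \notin A)) ->
    (forall x, x \in A -> k x \in A) -> {morph k : x / d x} ->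
  odd_perm k = false.
Proof.
move=> dK dA kA kd.
have k0_inj : injective (fun x => if x \in A then k x else x).
  move=> x y; case: ifP => xA; case: ifP => yA e //; first exact: perm_inj e.
    by move: (kA _ xA); rewrite e yA.
  by move: (kA _ yA); rewrite -e xA.
pose k0 := perm k0_inj.
(* k0 ^ d acts as k off A and trivially on A. *)
suff -> : k = (k0 * k0 ^ d)%g by rewrite odd_permM odd_permJ addbb.
apply/permP => x; rewrite permM -[k0 x]dK permJ !permE.
case xA: (x \in A); first by rewrite dA (kA _ xA) dK.
by rewrite dA xA -kd dK.
Qed.

Section Mate.

Variable n : nat.

Lemma mate_subproof (x : 'I_(2 * n)) : (if odd x then x.-1 else x.+1) < 2 * n.
Proof. by have := ltn_ord x; case: ifP; lia. Qed.

Definition mate_fun (x : 'I_(2 * n)) : 'I_(2 * n) := Ordinal (mate_subproof x).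

Lemma mate_funK : involutive mate_fun.
Proof. by move=> x; apply: val_inj => /=; do ! case: ifP; lia. Qed.

Definition mate : 'S_(2 * n) := perm (inv_inj mate_funK).

Lemma mateE x : mate x = mate_fun x.
Proof. by rewrite permE. Qed.

Lemma mateK : involutive mate.
Proof. by move=> x; rewrite !mateE mate_funK. Qed.

Lemma odd_mate x : odd (mate x) = ~~ odd x.
Proof. by rewrite mateE /=; case: ifP; lia. Qed.

Lemma mate_neq x : mate x != x.
Proof. by rewrite -(inj_eq (@ord_inj _)) mateE /=; case: ifP; lia. Qed.

Lemma half_mate x : (mate x)./2 = x./2.
Proof. by rewrite mateE /=; case: ifP; lia. Qed.

Lemma mate_unique (x y : 'I_(2 * n)) : x != y -> x./2 = y./2 -> y = mate x.
Proof.
rewrite -val_eqE /= => xy hxy; apply: val_inj; rewrite mateE /=.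
by case: ifP; lia.
Qed.

Lemma morph_mate_except_pair0 (k : 'S_(2 * n)) :
  (forall x : 'I_(2 * n), x./2 != 0 -> k (mate x) = mate (k x)) -> {morph k : x / mate x}.
Proof.
move=> kd x; have [x0|] := eqVneq x./2 0; last exact: kd.
pose z := (k^-1)%g (mate (k x)).
have kz : k z = mate (k x) by rewrite permKV.
have [z0|znz] := eqVneq z./2 0.
  have zx : x != z.
    by apply: contra_neq (mate_neq (k x)) => xz; rewrite -kz xz.
  by rewrite -(mate_unique zx) // z0.
move: (kd z znz); rewrite kz mateK => /perm_inj zx.
by move: znz; rewrite -half_mate zx x0.
Qed.

End Mate.

Section Pairs.

Variable n : nat.

Lemma pair_of_subproof (x : 'I_(2 * n)) : x./2 < n.
Proof. by rewrite ltn_half_double -mul2n. Qed.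

Definition pair_of (x : 'I_(2 * n)) : 'I_n := Ordinal (pair_of_subproof x).

Lemma mem_pairk (x : 'I_(2 * n)) k : (x \in pairk n k) = (x./2 == k).
Proof. by rewrite inE. Qed.

Lemma mem_pair_of (x : 'I_(2 * n)) (m : 'I_n) : (x \in pairk n m) = (pair_of x == m).
Proof. by rewrite mem_pairk -val_eqE. Qed.

Lemma card_pairk (m : 'I_n) : #|pairk n m| = 2.
Proof.
have lo : m.*2 < 2 * n by have := ltn_ord m; lia.
have hi : m.*2.+1 < 2 * n by have := ltn_ord m; lia.
have -> : pairk n m = [set Ordinal lo; Ordinal hi].
  by apply/setP => i; rewrite !inE -!val_eqE /=; lia.
by rewrite cards2 -val_eqE /= neq_ltn ltnSn.
Qed.

Lemma mstar_preim_partition :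
  mstar n = preim_partition (fun x : 'I_(2 * n) => x./2) [set: 'I_(2 * n)].
Proof.
apply/setP => P; apply/imsetP/imsetP => [[m _ ->]|[x _ ->]].
  have lo : m.*2 < 2 * n by have := ltn_ord m; lia.
  exists (Ordinal lo) => //; apply/setP => y.
  by rewrite mem_pairk !inE /= doubleK eq_sym.
exists (pair_of x) => //; apply/setP => y.
by rewrite mem_pairk !inE eq_sym.
Qed.

Lemma pmatching_mstar : pmatching (mstar n).
Proof.
rewrite /pmatching {1}mstar_preim_partition preim_partitionP /=.
by apply/forall_inP => e /imsetP[m _ ->]; rewrite card_pairk.
Qed.

Lemma pair_lift_subproof (p : 'S_n) (x : 'I_(2 * n)) :
  odd x + (p (pair_of x)).*2 < 2 * n.
Proof. by have := ltn_ord (p (pair_of x)); case: odd; lia. Qed.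

Lemma pair_lift_inj (p : 'S_n) :
  injective (fun x => Ordinal (pair_lift_subproof p x)).
Proof.
move=> x y /(congr1 val) /= e.
have /(congr1 val) /= hxy : pair_of x = pair_of y.
  by apply: (@perm_inj _ p); apply: ord_inj; move: e; case: (odd x); case: (odd y); lia.
have oxy : odd x = odd y by move: e; case: (odd x); case: (odd y); lia.
by apply: val_inj; rewrite -[val x]odd_double_half -[val y]odd_double_half oxy hxy.
Qed.

Definition pair_lift (p : 'S_n) : 'S_(2 * n) := perm (@pair_lift_inj p).

Lemma pair_of_pair_lift p x : pair_of (pair_lift p x) = p (pair_of x).
Proof. by apply: val_inj; rewrite permE /= half_bit_double. Qed.

Lemma pair_lift_pairk p (m : 'I_n) : pair_lift p @: pairk n m = pairk n (p m).
Proof.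
apply/setP/subset_cardP; first by rewrite card_imset ?card_pairk //; apply: perm_inj.
apply/subsetP => _ /imsetP[x xm ->].
by rewrite mem_pair_of pair_of_pair_lift (inj_eq perm_inj) -mem_pair_of.
Qed.

Lemma mact_pair_lift_mstar p : Defs.mact (pair_lift p) (mstar n) = mstar n.
Proof.
apply/setP => e; apply/imsetP/imsetP => [[_ /imsetP[m _ ->] ->]|[m _ ->]].
  by exists (p m); rewrite ?pair_lift_pairk.
exists (pairk n ((p^-1)%g m)); first exact: imset_f.
by rewrite pair_lift_pairk permKV.
Qed.

Lemma rot_subproof c (x : 'I_n) : (x + c) %% n < n.
Proof. by rewrite ltn_pmod // (leq_ltn_trans _ (ltn_ord x)). Qed.

Lemma rot_inj c : injective (fun x => Ordinal (rot_subproof c x)).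
Proof.
move=> x y /(congr1 val) /= /eqP; rewrite eqn_modDr !modn_small //.
by move=> /eqP; apply: val_inj.
Qed.

Definition rot c : 'S_n := perm (@rot_inj c).

Lemma rotE c x : (rot c x : nat) = (x + c) %% n.
Proof. by rewrite permE. Qed.

End Pairs.

Definition shape2_row n t p := if p < 2 * (n - t) then 0 else (p - 2 * (n - t))./2.+1.
Definition shape2_col n t p := if p < 2 * (n - t) then p else nat_of_bool (odd p).

Lemma rowcol_nseq2 t q : q < 2 * t -> rowcol (nseq t 2) q = (q./2, nat_of_bool (odd q)).
Proof.
elim: t q => [|t IH] q hq /=; first lia.
case: ifP => [|q2]; first by case: q {hq} => [|[|q]].
rewrite IH; last lia.
by case: q hq q2 => [|[|q]] //= _ _; rewrite subn2 /= negbK.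
Qed.

Lemma rowcol_shape2 n t p : t < n -> p < 2 * n ->
  rowcol (shape2 n t) p = (shape2_row n t p, shape2_col n t p).
Proof.
move=> tn pn; rewrite /= /shape2_row /shape2_col; case: ifP => // p_ge.
rewrite rowcol_nseq2; last lia.
congr (_, nat_of_bool _); lia.
Qed.

Lemma odd_shape2_col n t p : odd (shape2_col n t p) = odd p.
Proof. by rewrite /shape2_col; case: ifP => //; case: (odd p). Qed.

Lemma colstab1_shape2 n t (k : 'S_(2 * n)) : t < n -> colstab (shape2 n t) 1 k ->
  forall x, shape2_col n t (k x) = shape2_col n t x.
Proof.
move=> tn /forallP hk x; move: (hk x); rewrite invg1 !perm1 => /eqP.
by rewrite !rowcol_shape2.
Qed.

Section FourierEval.

Variables (R : fieldType) (N : nat).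
Local Open Scope ring_scope.

Lemma polytabloidE lam tau (r : tabloid N) :
  polytabloid R lam tau r =
  \sum_(k | colstab lam tau k) (-1) ^+ k * (r == tabloid_of lam (tau * k))%:R.
Proof. by rewrite sum_ffunE; apply: eq_bigr => k _; rewrite !ffunE. Qed.

Lemma fourierE (g : 'S_N -> R) v (r : tabloid N) :
  fourier g v r = N`!%:R^-1 * \sum_s g s * v [ffun x => r (s x)].
Proof.
by rewrite ffunE sum_ffunE; congr (_ * _); apply: eq_bigr => s _; rewrite !ffunE.
Qed.

Lemma polytabloid_in_specht lam (tau : 'S_N) : in_specht lam (polytabloid R lam tau).
Proof.
exists (fun sigma => (sigma == tau)%:R).
rewrite (bigD1 tau) //= eqxx scale1r big1 ?addr0 // => sigma /negPf ->.
exact: scale0r.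
Qed.

End FourierEval.

Section EdgeTabloid.

Variables n t : nat.
Hypothesis t2n : t.*2 < n.

Let tn : t < n. Proof. lia. Qed.

Definition edge_row a := if 1 <= a <= t then a else 0.

Definition edge_tabloid : tabloid (2 * n) :=
  [ffun x : 'I_(2 * n) => inord (edge_row x./2)].

Lemma Sset_sub_mact_preim_pair (s : 'S_(2 * n)) j (y z : 'I_(2 * n)) :
    Sset n t \subset Defs.mact s (mstar n) -> 1 <= j <= t ->
  (s y)./2 = j -> (s z)./2 = j -> y./2 = z./2.
Proof.
move=> sub jt sy sz; have jn : j < n by lia.
have /(subsetP sub)/imsetP[_ /imsetP[m _ ->] e] : pairk n j \in Sset n t.
  by apply/imsetP; exists (Ordinal jn); rewrite ?inE.
have mem_m x : (s x)./2 = j -> x./2 = m.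
  move=> sx; apply/eqP; rewrite -mem_pairk -(mem_imset _ _ (@perm_inj _ s)) -e.
  by rewrite mem_pairk sx.
by rewrite (mem_m y) ?(mem_m z).
Qed.

Lemma odd_perm_colstab_edge_tabloid (s k : 'S_(2 * n)) :
    colstab (shape2 n t) 1 k -> Sset n t \subset Defs.mact s (mstar n) ->
    [ffun x => edge_tabloid (s x)] = tabloid_of (shape2 n t) k ->
  odd_perm k = false.
Proof.
move=> /(colstab1_shape2 tn) col sub /ffunP tab.
have row x : edge_row (s (k x))./2 = shape2_row n t x.
  move: (tab (k x)); rewrite !ffunE permK rowcol_shape2 // => /(congr1 val) /=.
  rewrite !inordK //; have := ltn_ord x; rewrite /edge_row /shape2_row;
    do ! case: ifP; lia.
have odd_k x : odd (k x) = odd x by rewrite -(odd_shape2_col n t) col odd_shape2_col.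
have fix_k (x : 'I_(2 * n)) : 2 <= x < 2 * (n - t) -> k x = x.
  move=> hx; apply: ord_inj; move: (col x); rewrite /shape2_col.
  by case: (odd (k x)); do ! case: ifP; lia.
apply: (odd_perm_morph_involution (@mateK n) (A := [set x : 'I_(2 * n) | odd x])).
- by move=> x; rewrite !inE odd_mate.
- by move=> x; rewrite !inE odd_k.
apply: morph_mate_except_pair0 => x x0.
have [x_lo|x_hi] := ltnP x (2 * (n - t)).
  have x_mid : 1 < x < 2 * (n - t) by move: x0; rewrite -lt0n; lia.
  have mate_mid : 1 < mate n x < 2 * (n - t) by rewrite mateE /=; case: ifP; lia.
  by rewrite (fix_k _ x_mid) (fix_k _ mate_mid).
have kx : k x != k (mate n x).
  by rewrite (inj_eq perm_inj) eq_sym mate_neq.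
apply: mate_unique kx _.
have jt : 1 <= shape2_row n t x <= t.
  by have := ltn_ord x; rewrite /shape2_row; case: ifP; lia.
apply: (Sset_sub_mact_preim_pair sub jt).
  by move: (row x); rewrite /edge_row; case: ifP; lia.
move: (row (mate n x)); rewrite /edge_row /shape2_row mateE /=.
by move: jt; rewrite /shape2_row; do ! case: ifP; lia.
Qed.

Lemma edge_tabloid_pair_lift_rot :
  [ffun x => edge_tabloid (pair_lift (rot n t.+1) x)] = tabloid_of (shape2 n t) 1.
Proof.
apply/ffunP => x; rewrite !ffunE invg1 perm1 rowcol_shape2 //; congr inord.
rewrite -[_./2]/(nat_of_ord (pair_of _)) pair_of_pair_lift rotE /=.
have xn := ltn_ord x; case: (ltnP (x./2 + t.+1) n) => [lt_n|ge_n].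
  by rewrite modn_small // /edge_row /shape2_row; do ! case: ifP; lia.
rewrite -(subnK ge_n) modnDr modn_small; last lia.
by rewrite /edge_row /shape2_row; do ! case: ifP; lia.
Qed.

Lemma mstar_in_FS : mstar n \in FS (Sset n t).
Proof.
rewrite inE pmatching_mstar; apply/subsetP => _ /imsetP[k _ ->].
exact: imset_f.
Qed.

Section Positivity.

Variable R : realFieldType.
Local Open Scope ring_scope.

Lemma polytabloid_edge_term_ge0 (s k : 'S_(2 * n)) :
    Sset n t \subset Defs.mact s (mstar n) -> colstab (shape2 n t) 1 k ->
  0 <= (-1) ^+ k *
       ([ffun x => edge_tabloid (s x)] == tabloid_of (shape2 n t) (1 * k))%:R :> R.
Proof.
move=> sub colk; rewrite mul1g; case: eqP => [tab|_]; last by rewrite mulr0.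
by rewrite (odd_perm_colstab_edge_tabloid colk sub tab) mulr1.
Qed.

Lemma polytabloid_edge_ge0 (s : 'S_(2 * n)) :
    Sset n t \subset Defs.mact s (mstar n) ->
  0 <= polytabloid R (shape2 n t) 1 [ffun x => edge_tabloid (s x)].
Proof.
move=> sub; rewrite polytabloidE; apply: sumr_ge0 => k.
exact: polytabloid_edge_term_ge0.
Qed.

Lemma polytabloid_edge_gt0 :
  0 < polytabloid R (shape2 n t) 1 [ffun x => edge_tabloid (pair_lift (rot n t.+1) x)].
Proof.
have sub : Sset n t \subset Defs.mact (pair_lift (rot n t.+1)) (mstar n).
  by rewrite mact_pair_lift_mstar; move: mstar_in_FS; rewrite inE => /andP[].
rewrite lt0r polytabloid_edge_ge0 // andbT polytabloidE psumr_neq0; last first.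
  by move=> k; apply: polytabloid_edge_term_ge0.
apply/hasP; exists 1%g; first exact: mem_index_enum.
rewrite edge_tabloid_pair_lift_rot mul1g eqxx odd_perm1 mulr1 ltr01 andbT.
by apply/forallP => x; rewrite perm1.
Qed.

End Positivity.

End EdgeTabloid.

Unset Implicit Arguments.

Theorem mainTheorem17 (R : realFieldType) (n t : nat) (ht : (t.*2 < n)%N) :
  fourier_nonzero (shape2 n t)
    (ftilde (@indFS R n (Sset n t))).
Proof.
exists (polytabloid R (shape2 n t) 1); split; first exact: polytabloid_in_specht.
apply/eqP => /ffunP/(_ (edge_tabloid n t))/eqP; apply/negP.
rewrite fourierE ffunE mulf_eq0 invr_eq0 pnatr_eq0 negb_or -lt0n fact_gt0 /=.
rewrite psumr_neq0 => [|s _]; last first.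
  rewrite /ftilde /indFS inE; case: andP => [[_ sub]|_]; last by rewrite mul0r.
  by rewrite mul1r polytabloid_edge_ge0.
apply/hasP; exists (pair_lift (rot n t.+1)); first exact: mem_index_enum.
by rewrite /ftilde /indFS mact_pair_lift_mstar mstar_in_FS mul1r polytabloid_edge_gt0.
Qed.
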